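(* Let $\eta:\mathrm{STVB}_2\to M_3(\mathbb{C})$ be a complex homogeneous local representation of $\mathrm{STVB}_2$. Then $\eta$ is equivalent to one of the following thirteen representations $\eta_i$, described by $2\times2$ matrices $S,R,T,G$ with $\eta_i(\sigma_1)=S\oplus 1$, $\eta_i(\sigma_1^{-1})=S^{-1}\oplus 1$, $\eta_i(\rho_1)=R\oplus 1$, $\eta_i(\tau_1)=T\oplus 1$, $\eta_i(\gamma_1)=G\oplus 1$, $\eta_i(\gamma_2)=1\oplus G$ (all parameters complex): \begin{itemize} \item[(1)] $S=\begin{pmatrix}a&b\\ \frac{b}{x^2}&a\end{pmatrix}$, $R=\begin{pmatrix}0&x\\ \frac1x&0\end{pmatrix}$, $T=\begin{pmatrix}f&g\\ \frac{g}{x^2}&f\end{pmatrix}$, $G=\mathrm{diag}(-1,1)$; $a^2x^2-b^2\neq0$, $x\neq0$. \item[(2)] $S=\begin{pmatrix}a&b\\ \frac{b-bz^2}{x^2}&\frac{ax+2bz}{x}\end{pmatrix}$, $R=\begin{pmatrix}-z&x\\ \frac{1-z^2}{x}&z\end{pmatrix}$, $T=\begin{pmatrix}f&g\\ \frac{g-gz^2}{x^2}&\frac{fx+2gz}{x}\end{pmatrix}$, $G=I_2$; $a^2x^2+2abxz-b^2+b^2z^2\neq0$, $x\neq0$. \item[(3)] $S=\begin{pmatrix}a&b\\ c&d\end{pmatrix}$, $R=-I_2$, $T=\begin{pmatrix}f&g\\ \frac{cg}{b}&\frac{bf-ag+dg}{b}\end{pmatrix}$, $G=I_2$; $ad-bc\neq0$,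 $b\neq0$. \item[(4)] $S=\begin{pmatrix}a&b\\ c&d\end{pmatrix}$, $R=I_2$, $T=\begin{pmatrix}f&g\\ \frac{cg}{b}&\frac{bf-ag+dg}{b}\end{pmatrix}$, $G=I_2$; $ad-bc\neq0$, $b\neq0$. \item[(5)] $S=aI_2$, $R=-I_2$, $T=\begin{pmatrix}f&g\\ h&k\end{pmatrix}$, $G=I_2$; $a\neq0$. \item[(6)] $S=\begin{pmatrix}a&0\\ c&d\end{pmatrix}$, $R=-I_2$, $T=\begin{pmatrix}f&0\\ h&\frac{cf-ah+dh}{c}\end{pmatrix}$, $G=I_2$; $ad\neq0$, $c\neq0$. \item[(7)] $S=\begin{pmatrix}a&0\\ c&\frac{-2c+ay}{y}\end{pmatrix}$, $R=\begin{pmatrix}1&0\\ y&-1\end{pmatrix}$, $T=\begin{pmatrix}f&0\\ h&\frac{-2h+fy}{y}\end{pmatrix}$, $G=I_2$; $a(-2c+ay)\neq0$, $y\neq0$. \item[(8)] $S=\begin{pmatrix}a&0\\ c&\frac{2c+ay}{y}\end{pmatrix}$, $R=\begin{pmatrix}-1&0\\ y&1\end{pmatrix}$, $T=\begin{pmatrix}f&0\\ h&\frac{2h+fy}{y}\end{pmatrix}$, $G=I_2$; $a(2c+ay)\neq0$, $y\neq0$. \item[(9)] $S=aI_2$, $R=I_2$, $T=\begin{pmatrix}f&g\\ h&k\end{pmatrix}$, $G=I_2$; $a\neq0$. \item[(10)] $S=\begin{pmatrix}a&0\\ c&d\end{pmatrix}$, $R=I_2$, $T=\begin{pmatrix}f&0\\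 h&\frac{cf-ah+dh}{c}\end{pmatrix}$, $G=I_2$; $ad\neq0$, $c\neq0$. \item[(11)] $S=\mathrm{diag}(a,d)$, $R=\mathrm{diag}(1,-1)$, $T=\mathrm{diag}(f,k)$, $G=I_2$; $ad\neq0$. \item[(12)] $S=\mathrm{diag}(a,d)$, $R=\mathrm{diag}(-1,1)$, $T=\mathrm{diag}(f,k)$, $G=I_2$; $ad\neq0$. \item[(13)] $S=\mathrm{diag}(a,d)$, $R=I_2$, $T=\mathrm{diag}(f,k)$, $G=I_2$; $ad\neq0$. \end{itemize} In addition, if $\eta(\tau_1)$ is invertible, then $\eta$ becomes a representation of $\mathrm{STVG}_2$ (sending $\bar\tau_1$ to $\eta(\tau_1)^{-1}$).
   Context: The singular twisted virtual braid monoid $\mathrm{STVB}_2$ is the monoid generated by $\sigma_1,\sigma_1^{-1},\rho_1,\tau_1,\gamma_1,\gamma_2$ with defining relations $\sigma_1\sigma_1^{-1}=\sigma_1^{-1}\sigma_1=1$, $\rho_1^2=1$, $\gamma_1^2=\gamma_2^2=1$, $\gamma_1\gamma_2=\gamma_2\gamma_1$, $\rho_1\gamma_1=\gamma_2\rho_1$, $\rho_1\sigma_1\rho_1=\gamma_2\gamma_1\sigma_1\gamma_1\gamma_2$, $\sigma_1\tau_1=\tau_1\sigma_1$, $\rho_1\tau_1\rho_1=\gamma_2\gamma_1\tau_1\gamma_1\gamma_2$. The singular twisted virtual braid group $\mathrm{STVG}_2$ is the group with generators $\sigma_1,\rho_1,\tau_1,\bar\tau_1,\gamma_1,\gamma_2$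 satisfying all relations of $\mathrm{STVB}_2$, the same relations with $\bar\tau_1$ in place of $\tau_1$, and $\tau_1\bar\tau_1=\bar\tau_1\tau_1=1$. For a $2\times2$ matrix $M$, $M\oplus1=\begin{pmatrix}M&0\\0&1\end{pmatrix}$ and $1\oplus M=\begin{pmatrix}1&0\\0&M\end{pmatrix}$. A complex local representation $\eta:\mathrm{STVB}_2\to M_3(\mathbb{C})$ is a monoid homomorphism with $\eta(\sigma_1)=S\oplus1$, $\eta(\rho_1)=R\oplus1$, $\eta(\tau_1)=T\oplus1$, $\eta(\gamma_1)=G_1\oplus1$, $\eta(\gamma_2)=1\oplus G_2$, where $S,R,G_1,G_2\in\mathrm{GL}_2(\mathbb{C})$ and $T\in M_2(\mathbb{C})$; it is homogeneous if $G_1=G_2$. Two representations are equivalent if they are conjugate by a fixed invertible matrix. *)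

From HB Require Import structures.
From mathcomp Require Import all_boot all_algebra complex reals.
Set Implicit Arguments. Unset Strict Implicit. Unset Printing Implicit Defensive.
Import GRing.Theory.
Local Open Scope ring_scope.

Section Defs.
Variable R : realType.
Local Notation C := (R[i])%type.

Definition mx2 (a b c d : C) : 'M[C]_2 :=
  \matrix_(i < 2, j < 2)
    if (i == 0 :> nat) then (if (j == 0 :> nat) then a else b)
    else (if (j == 0 :> nat) then c else d).

Definition diag2 (a d : C) : 'M[C]_2 := mx2 a 0 0 d.

Definition dsumR (M : 'M[C]_2) : 'M[C]_3 := block_mx M 0 0 (1%:M : 'M[C]_1).
Definition dsumL (M : 'M[C]_2) : 'M[C]_3 := block_mx (1%:M : 'M[C]_1) 0 0 M.

Inductive stvb_gen := sig1 | sig1inv | rho1 | tau1 | gam1 | gam2.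

(* A monoid homomorphism STVB_2 -> M_3(C) is the same as an assignment of
   matrices to the generators satisfying the defining relations. *)
Definition stvb_rep (eta : stvb_gen -> 'M[C]_3) : Prop :=
  [/\ eta sig1 *m eta sig1inv = 1%:M,
      eta sig1inv *m eta sig1 = 1%:M,
      eta rho1 *m eta rho1 = 1%:M,
      eta gam1 *m eta gam1 = 1%:M &
      eta gam2 *m eta gam2 = 1%:M] /\
  [/\ eta gam1 *m eta gam2 = eta gam2 *m eta gam1,
      eta rho1 *m eta gam1 = eta gam2 *m eta rho1,
      eta rho1 *m eta sig1 *m eta rho1
        = eta gam2 *m eta gam1 *m eta sig1 *m eta gam1 *m eta gam2,
      eta sig1 *m eta tau1 = eta tau1 *m eta sig1 &
      eta rho1 *m eta tau1 *m eta rho1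
        = eta gam2 *m eta gam1 *m eta tau1 *m eta gam1 *m eta gam2].

Definition local_rep_with (eta : stvb_gen -> 'M[C]_3)
    (S Rm T G1 G2 : 'M[C]_2) : Prop :=
  [/\ stvb_rep eta,
      [/\ S \in unitmx, Rm \in unitmx, G1 \in unitmx & G2 \in unitmx],
      eta sig1 = dsumR S, eta rho1 = dsumR Rm &
      [/\ eta tau1 = dsumR T, eta gam1 = dsumR G1 & eta gam2 = dsumL G2]].

Definition local_rep (eta : stvb_gen -> 'M[C]_3) : Prop :=
  exists S Rm T G1 G2, local_rep_with eta S Rm T G1 G2.

Definition homogeneous_local_rep (eta : stvb_gen -> 'M[C]_3) : Prop :=
  exists S Rm T G, local_rep_with eta S Rm T G G.

Definition rep_equiv (eta eta' : stvb_gen -> 'M[C]_3) : Prop :=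
  exists P : 'M[C]_3, P \in unitmx /\
    forall g, eta g = P *m eta' g *m invmx P.

Definition eta_of (S Rm T G : 'M[C]_2) : stvb_gen -> 'M[C]_3 :=
  fun g => match g with
  | sig1 => dsumR S
  | sig1inv => dsumR (invmx S)
  | rho1 => dsumR Rm
  | tau1 => dsumR T
  | gam1 => dsumR G
  | gam2 => dsumL G
  end.

Definition I2 : 'M[C]_2 := 1%:M.

Definition thirteen_families (eta : stvb_gen -> 'M[C]_3) : Prop :=
      (exists a b f g x : C,
        [/\ a ^+ 2 * x ^+ 2 - b ^+ 2 != 0, x != 0 &
          rep_equiv eta (eta_of (mx2 a b (b / x ^+ 2) a) (mx2 0 x (1 / x) 0)
                                (mx2 f g (g / x ^+ 2) f) (diag2 (-1) 1))]) \/
      (exists a b f g x z : C,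
        [/\ a ^+ 2 * x ^+ 2 + 2 * a * b * x * z - b ^+ 2 + b ^+ 2 * z ^+ 2 != 0,
            x != 0 &
          rep_equiv eta
            (eta_of (mx2 a b ((b - b * z ^+ 2) / x ^+ 2) ((a * x + 2 * b * z) / x))
                    (mx2 (- z) x ((1 - z ^+ 2) / x) z)
                    (mx2 f g ((g - g * z ^+ 2) / x ^+ 2) ((f * x + 2 * g * z) / x))
                    I2)]) \/
      (exists a b c d f g : C,
        [/\ a * d - b * c != 0, b != 0 &
          rep_equiv eta (eta_of (mx2 a b c d) (- I2)
                   (mx2 f g (c * g / b) ((b * f - a * g + d * g) / b)) I2)]) \/
      (exists a b c d f g : C,
        [/\ a * d - b * c != 0, b != 0 &
          rep_equiv eta (eta_of (mx2 a b c d) I2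
                   (mx2 f g (c * g / b) ((b * f - a * g + d * g) / b)) I2)]) \/
      (exists a f g h k : C,
        a != 0 /\ rep_equiv eta (eta_of (a%:M) (- I2) (mx2 f g h k) I2)) \/
      (exists a c d f h : C,
        [/\ a * d != 0, c != 0 &
          rep_equiv eta (eta_of (mx2 a 0 c d) (- I2)
                   (mx2 f 0 h ((c * f - a * h + d * h) / c)) I2)]) \/
      (exists a c f h y : C,
        [/\ a * (- 2 * c + a * y) != 0, y != 0 &
          rep_equiv eta (eta_of (mx2 a 0 c ((- 2 * c + a * y) / y)) (mx2 1 0 y (-1))
                   (mx2 f 0 h ((- 2 * h + f * y) / y)) I2)]) \/
      (exists a c f h y : C,
        [/\ a * (2 * c + a * y) != 0, y != 0 &
          rep_equiv eta (eta_of (mx2 a 0 c ((2 * c + a * y) / y)) (mx2 (-1) 0 y 1)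
                   (mx2 f 0 h ((2 * h + f * y) / y)) I2)]) \/
      (exists a f g h k : C,
        a != 0 /\ rep_equiv eta (eta_of (a%:M) I2 (mx2 f g h k) I2)) \/
      (exists a c d f h : C,
        [/\ a * d != 0, c != 0 &
          rep_equiv eta (eta_of (mx2 a 0 c d) I2
                   (mx2 f 0 h ((c * f - a * h + d * h) / c)) I2)]) \/
      (exists a d f k : C,
        a * d != 0 /\
          rep_equiv eta (eta_of (diag2 a d) (diag2 1 (-1)) (diag2 f k) I2)) \/
      (exists a d f k : C,
        a * d != 0 /\
          rep_equiv eta (eta_of (diag2 a d) (diag2 (-1) 1) (diag2 f k) I2)) \/
      (exists a d f k : C,
        a * d != 0 /\
          rep_equiv eta (eta_of (diag2 a d) I2 (diag2 f k) I2)).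

Inductive stvg_gen := gsig1 | grho1 | gtau1 | gtaubar1 | ggam1 | ggam2.

(* A group homomorphism STVG_2 -> GL_3(C): invertible images of the
   generators satisfying the defining relations (sigma1^{-1} is the group
   inverse, so the relations sigma1 sigma1^{-1} = 1 are automatic). *)
Definition stvg_rep (eta : stvg_gen -> 'M[C]_3) : Prop :=
  [/\ forall g, eta g \in unitmx,
      [/\ eta grho1 *m eta grho1 = 1%:M,
          eta ggam1 *m eta ggam1 = 1%:M,
          eta ggam2 *m eta ggam2 = 1%:M,
          eta ggam1 *m eta ggam2 = eta ggam2 *m eta ggam1 &
          eta grho1 *m eta ggam1 = eta ggam2 *m eta grho1],
      eta grho1 *m eta gsig1 *m eta grho1
        = eta ggam2 *m eta ggam1 *m eta gsig1 *m eta ggam1 *m eta ggam2,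
      [/\ eta gsig1 *m eta gtau1 = eta gtau1 *m eta gsig1,
          eta grho1 *m eta gtau1 *m eta grho1
            = eta ggam2 *m eta ggam1 *m eta gtau1 *m eta ggam1 *m eta ggam2,
          eta gsig1 *m eta gtaubar1 = eta gtaubar1 *m eta gsig1 &
          eta grho1 *m eta gtaubar1 *m eta grho1
            = eta ggam2 *m eta ggam1 *m eta gtaubar1 *m eta ggam1 *m eta ggam2] &
      eta gtau1 *m eta gtaubar1 = 1%:M /\ eta gtaubar1 *m eta gtau1 = 1%:M].

Definition extend_to_stvg (eta : stvb_gen -> 'M[C]_3) : stvg_gen -> 'M[C]_3 :=
  fun g => match g with
  | gsig1 => eta sig1
  | grho1 => eta rho1
  | gtau1 => eta tau1
  | gtaubar1 => invmx (eta tau1)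
  | ggam1 => eta gam1
  | ggam2 => eta gam2
  end.

End Defs.

(* The relations [gam1 gam2 = gam2 gam1] and [rho1 gam1 = gam2 rho1] force
   [G = diag(e, 1)] with [e = +-1], and [R] to have zero diagonal when
   [e = -1].  Then [gam2 gam1 = e I (+) 1] commutes with every [M (+) 1], so
   the twisted relations say that the involution [R] commutes with [S] and
   [T].  Since the commutant of a non-scalar 2x2 matrix [X] is spanned by [1]
   and [X], a case analysis on the shape of [R] (and, for [R = +-I], on the
   shape of [S]) lands in one of the thirteen families; only a diagonal
   non-scalar [S] with [R = -I] needs a change of basis.  The extension to
   STVG_2 works for any representation, because inverses inherit commutation
   and conjugation relations. *)

From mathcomp Require Import all_boot all_algebra complex reals ring.
From Stdlib Require Import FunctionalExtensionality.
Set Implicit Arguments. Unset Strict Implicit. Unset Printing Implicit Defensive.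
Import GRing.Theory Num.Theory.
Local Open Scope ring_scope.

Section MatrixFacts.
Variables (K : comUnitRingType) (n : nat).
Implicit Types A B P Q : 'M[K]_n.

Lemma invmx_eq A B : A *m B = 1%:M -> invmx A = B.
Proof.
move=> AB; have [uA _] := mulmx1_unit AB.
by rewrite -[invmx A]mulmx1 -AB mulKmx.
Qed.

Lemma commute_invmx A B : B \in unitmx -> A *m B = B *m A ->
  A *m invmx B = invmx B *m A.
Proof.
move=> uB AB; apply: (canRL (mulKmx uB)).
by rewrite mulmxA -AB mulmxK.
Qed.

Lemma invmx_conj P Q A : P *m Q = 1%:M -> A \in unitmx ->
  invmx (P *m A *m Q) = P *m invmx A *m Q.
Proof.
move=> PQ uA; apply: invmx_eq.
by rewrite -!mulmxA (mulmxA Q) (mulmx1C PQ) mul1mx mulKVmx.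
Qed.

Lemma involution_conj_commute P A : P *m P = 1%:M -> P *m A *m P = A ->
  P *m A = A *m P.
Proof. by move=> PP PAP; rewrite -{2}PAP -mulmxA PP mulmx1. Qed.

End MatrixFacts.

Section TwoByTwo.
Variable R : realType.
Local Notation C := R[i].
Implicit Types a b c d p q r s u v w t : C.

Lemma sqr_eq1 (x : C) : x * x = 1 -> x = 1 \/ x = -1.
Proof. by move=> xx; apply/pred2P; rewrite -sqrf_eq1 expr2 xx. Qed.

Lemma mx2E (M : 'M[C]_2) : M = mx2 (M 0 0) (M 0 1) (M 1 0) (M 1 1).
Proof.
apply/matrixP => i j; rewrite mxE.
case: i => [[|[|i]] Hi]; case: j => [[|[|j]] Hj] //=.
all: by congr (M _ _); apply/val_inj.
Qed.

Lemma mul_mx2 a b c d p q r s :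
  mx2 a b c d *m mx2 p q r s =
  mx2 (a * p + b * r) (a * q + b * s) (c * p + d * r) (c * q + d * s).
Proof.
apply/matrixP => i j; rewrite !mxE !big_ord_recr big_ord0 /= !mxE /= add0r.
by case: i => [[|[|i]] Hi]; case: j => [[|[|j]] Hj].
Qed.

Lemma mx2_inj a b c d p q r s :
  mx2 a b c d = mx2 p q r s -> [/\ a = p, b = q, c = r & d = s].
Proof.
move/matrixP => E.
by move: (E 0 0) (E 0 1) (E 1 0) (E 1 1); rewrite !mxE.
Qed.

Lemma scalar_mx2 a : a%:M = mx2 a 0 0 a.
Proof.
apply/matrixP => i j; rewrite !mxE.
by case: i => [[|[|i]] Hi]; case: j => [[|[|j]] Hj].
Qed.

Lemma oppmx2 a b c d : - mx2 a b c d = mx2 (- a) (- b) (- c) (- d).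
Proof.
apply/matrixP => i j; rewrite !mxE.
by case: i => [[|[|i]] Hi]; case: j => [[|[|j]] Hj].
Qed.

Lemma I2E : I2 R = mx2 1 0 0 1.
Proof. exact: scalar_mx2. Qed.

Lemma det_mx2 a b c d : \det (mx2 a b c d) = a * d - b * c.
Proof.
rewrite (expand_det_row _ 0) !big_ord_recr big_ord0 /= add0r.
rewrite /cofactor !det_mx11 !mxE /= expr0 expr1 mulN1r mul1r; ring.
Qed.

Lemma unitmx_mx2 a b c d : (mx2 a b c d \in unitmx) = (a * d - b * c != 0).
Proof. by rewrite unitmxE det_mx2 unitfE. Qed.

Lemma mx2_involution u v w t : mx2 u v w t *m mx2 u v w t = 1%:M ->
  [/\ u * u + v * w = 1, v * (u + t) = 0, w * (u + t) = 0 & w * v + t * t = 1].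
Proof.
rewrite mul_mx2 scalar_mx2 => /mx2_inj [e00 e01 e10 e11].
by split; rewrite // mulrDr; [rewrite [v * u]mulrC | rewrite [w * t]mulrC].
Qed.

Lemma commute_mx2_entries u v w t p q r s :
  mx2 u v w t *m mx2 p q r s = mx2 p q r s *m mx2 u v w t ->
  [/\ v * r = q * w, u * q + v * s = p * v + q * t
    & w * p + t * r = r * u + s * w].
Proof.
rewrite !mul_mx2 => /mx2_inj [e00 e01 e10 _]; split => //.
by move: e00; rewrite [p * u]mulrC => /addrI.
Qed.

Lemma mx2_commutant_upper u v w t p q r s : v != 0 ->
  mx2 u v w t *m mx2 p q r s = mx2 p q r s *m mx2 u v w t ->
  r = q * w / v /\ s = p + q * (t - u) / v.
Proof.
move=> v0 /commute_mx2_entries [e00 e01 _].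
have e01' : v * s = p * v + q * t - u * q by rewrite -e01; ring.
by split; apply: (mulfI v0); rewrite ?e00 ?e01'; field.
Qed.

Lemma mx2_commutant_lower u v w t p q r s : w != 0 ->
  mx2 u v w t *m mx2 p q r s = mx2 p q r s *m mx2 u v w t ->
  q = r * v / w /\ s = p + r * (t - u) / w.
Proof.
move=> w0 /commute_mx2_entries [e00 _ e10].
have e00' : w * q = v * r by rewrite e00; ring.
have e10' : w * s = w * p + t * r - r * u by rewrite e10; ring.
by split; apply: (mulfI w0); rewrite ?e00' ?e10'; field.
Qed.

Lemma mx2_commutant_diag a d p q r s : a != d ->
  diag2 a d *m mx2 p q r s = mx2 p q r s *m diag2 a d -> q = 0 /\ r = 0.
Proof.
rewrite -subr_eq0 => ad /commute_mx2_entries [_ e01 e10].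
split; apply: (mulIf ad); rewrite mul0r; [move: e01 | move: e10];
  rewrite !(mul0r, mulr0, add0r, addr0) => e; rewrite mulrBr -e; ring.
Qed.

End TwoByTwo.

Section DirectSums.
Variable R : realType.
Local Notation C := R[i].
Implicit Types (A B M : 'M[C]_2) (a b c d p : C).

Definition mx3 (a b c d e f g h k : C) : 'M[C]_3 :=
  \matrix_(i < 3, j < 3)
    nth 0 (nth [::] [:: [:: a; b; c]; [:: d; e; f]; [:: g; h; k]] i) j.

Lemma mul_mx3 (a b c d e f g h k a' b' c' d' e' f' g' h' k' : C) :
  mx3 a b c d e f g h k *m mx3 a' b' c' d' e' f' g' h' k' =
  mx3 (a * a' + b * d' + c * g') (a * b' + b * e' + c * h') (a * c' + b * f' + c * k')
      (d * a' + e * d' + f * g') (d * b' + e * e' + f * h') (d * c' + e * f' + f * k')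
      (g * a' + h * d' + k * g') (g * b' + h * e' + k * h') (g * c' + h * f' + k * k').
Proof.
apply/matrixP => i j; rewrite !mxE !big_ord_recr big_ord0 /= !mxE /= add0r.
by case: i => [[|[|[|i]]] Hi]; case: j => [[|[|[|j]]] Hj].
Qed.

Lemma mx3_inj (a b c d e f g h k a' b' c' d' e' f' g' h' k' : C) :
  mx3 a b c d e f g h k = mx3 a' b' c' d' e' f' g' h' k' ->
  [/\ [/\ a = a', b = b' & c = c'], [/\ d = d', e = e' & f = f'] &
      [/\ g = g', h = h' & k = k']].
Proof.
move/matrixP => E.
move: (E 0 0) (E 0 1) (E 0 2%:R) (E 1 0) (E 1 1) (E 1 2%:R)
      (E 2%:R 0) (E 2%:R 1) (E 2%:R 2%:R).
by rewrite !mxE.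
Qed.

Ltac block_entries :=
  repeat (rewrite ?mxE /=; try (rewrite /split; case: ltnP => //= ?)).

Lemma dsumR_mx2 a b c d : dsumR (mx2 a b c d) = mx3 a b 0 c d 0 0 0 1.
Proof.
apply/matrixP => i j.
by case: i => [[|[|[|i]]] Hi]; case: j => [[|[|[|j]]] Hj] //; block_entries.
Qed.

Lemma dsumL_mx2 a b c d : dsumL (mx2 a b c d) = mx3 1 0 0 0 a b 0 c d.
Proof.
apply/matrixP => i j.
by case: i => [[|[|[|i]]] Hi]; case: j => [[|[|[|j]]] Hj] //; block_entries.
Qed.

Lemma dsumR_mul A B : dsumR A *m dsumR B = dsumR (A *m B).
Proof.
rewrite /dsumR; etransitivity; first exact: (@mulmx_block _ 2 1 2 1 2 1).
by rewrite !(mulmx0, mul0mx, addr0, add0r) mul1mx.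
Qed.

Lemma dsumR1 : dsumR (1%:M : 'M[C]_2) = 1%:M.
Proof. by rewrite /dsumR [RHS](scalar_mx_block 2 1). Qed.

Lemma dsumL1 : dsumL (1%:M : 'M[C]_2) = 1%:M.
Proof. by rewrite /dsumL [RHS](scalar_mx_block 1 2). Qed.

Lemma dsumR_inj : injective (@dsumR R).
Proof. by move=> A B /(@eq_block_mx _ 2 1 2 1) []. Qed.

Lemma unitmx_dsumR A : (dsumR A \in unitmx) = (A \in unitmx).
Proof. by have := @block_diag_mx_unit _ 2 1 A 1%:M; rewrite unitmx1 andbT. Qed.

Lemma invmx_dsumR A : A \in unitmx -> invmx (dsumR A) = dsumR (invmx A).
Proof.
rewrite -unitmx_dsumR => uA.
by have := @invmx_block_diag _ 2 1 A 1%:M uA; rewrite invmx1.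
Qed.

Lemma dsumL_dsumR_diag2 p :
  dsumL (diag2 p 1) *m dsumR (diag2 p 1) = dsumR p%:M /\
  dsumR (diag2 p 1) *m dsumL (diag2 p 1) = dsumR p%:M.
Proof.
rewrite scalar_mx2 !dsumR_mx2 dsumL_mx2 !mul_mx3.
by split; congr mx3; ring.
Qed.

End DirectSums.

Section Representations.
Variable R : realType.
Local Notation C := R[i].
Implicit Types (S Rm T G : 'M[C]_2) (eta : stvb_gen -> 'M[C]_3).

Lemma eta_of_local_rep eta S Rm T G :
  local_rep_with eta S Rm T G G -> eta = eta_of S Rm T G.
Proof.
case=> [[[sig_inv _ _ _ _] _] [uS _ _ _] eta_sig eta_rho [eta_tau eta_g1 eta_g2]].
have eta_sig_inv : eta sig1inv = dsumR (invmx S).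
  by rewrite -invmx_dsumR // -eta_sig (invmx_eq sig_inv).
by apply: functional_extensionality; case.
Qed.

Lemma homogeneous_gamma_cases Rm G : G *m G = 1%:M ->
  dsumR G *m dsumL G = dsumL G *m dsumR G ->
  dsumR Rm *m dsumR G = dsumL G *m dsumR Rm ->
  G = I2 R \/ [/\ G = diag2 (-1) 1, Rm 0 0 = 0 & Rm 1 1 = 0].
Proof.
rewrite [in dsumR Rm](mx2E Rm) (mx2E G) I2E mul_mx2 scalar_mx2.
rewrite !dsumR_mx2 !dsumL_mx2 !mul_mx3.
move: (G 0 0) (G 0 1) (G 1 0) (G 1 1) (Rm 0 0) (Rm 0 1) (Rm 1 0) (Rm 1 1).
move=> p q r s u v w t.
move=> /mx2_inj [pp _ _ _] /mx3_inj [[_ _ qq] _ [rr _ _]].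
move=> /mx3_inj [[up _ _] [_ tp _] [_ _ s1]].
rewrite !(mul0r, mulr0, mul1r, mulr1, addr0, add0r) in qq rr up tp s1.
have q0 : q = 0 by apply/eqP; rewrite -[q == 0]orbb -mulf_eq0 qq.
have r0 : r = 0 by apply/eqP; rewrite -[r == 0]orbb -mulf_eq0 -rr.
subst q r s; rewrite !(mulr0, addr0, add0r, mulr1) in pp up tp.
have [p1 | pN1] := sqr_eq1 pp; first by left; rewrite p1.
right; split; rewrite ?pN1 //; apply/eqP; rewrite -eqNr.
  by rewrite -mulrN1 -pN1 up.
by rewrite -mulN1r -pN1 -tp.
Qed.

Lemma gamma_conj_dsumR G M :
  (G = I2 R \/ G = diag2 (-1) 1) ->
  dsumL G *m dsumR G *m dsumR M *m dsumR G *m dsumL G = dsumR M.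
Proof.
move=> HG; have [p [-> pp]] : exists p, G = diag2 p 1 /\ p * p = 1.
  by case: HG => ->; [exists 1; rewrite I2E mulr1 | exists (-1); rewrite mulrNN mulr1].
have [LR RL] := dsumL_dsumR_diag2 p.
rewrite -mulmxA RL LR !dsumR_mul mul_scalar_mx -scalemxAl mul_mx_scalar.
by rewrite scalerA pp scale1r.
Qed.

Lemma eta_of_relations S Rm T G : stvb_rep (eta_of S Rm T G) ->
  [/\ Rm *m Rm = 1%:M, Rm *m S = S *m Rm, Rm *m T = T *m Rm, S *m T = T *m S
    & G = I2 R \/ [/\ G = diag2 (-1) 1, Rm 0 0 = 0 & Rm 1 1 = 0]].
Proof.
rewrite /stvb_rep /= => -[[_ _ RR GG _] [gam_comm rho_gam rho_sig sig_tau rho_tau]].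
have RR2 : Rm *m Rm = 1%:M by apply: dsumR_inj; rewrite -dsumR_mul RR dsumR1.
have GG2 : G *m G = 1%:M by apply: dsumR_inj; rewrite -dsumR_mul GG dsumR1.
have HG := homogeneous_gamma_cases GG2 gam_comm rho_gam.
have conj M : dsumL G *m dsumR G *m dsumR M *m dsumR G *m dsumL G = dsumR M.
  by apply: gamma_conj_dsumR; case: HG => [|[]]; [left | right].
split => //; [apply: involution_conj_commute => // ..|]; apply: dsumR_inj.
- by rewrite -!dsumR_mul rho_sig conj.
- by rewrite -!dsumR_mul rho_tau conj.
- by rewrite -!dsumR_mul sig_tau.
Qed.

Lemma stvb_rep_extend eta : stvb_rep eta -> eta tau1 \in unitmx ->
  stvg_rep (extend_to_stvg eta).
Proof.
case=> [[sig_inv _ RR G1 G2] [gam_comm rho_gam rho_sig sig_tau rho_tau]] uT.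
have gam_inv : eta gam2 *m eta gam1 *m (eta gam1 *m eta gam2) = 1%:M.
  by rewrite -mulmxA (mulmxA (eta gam1)) G1 mul1mx G2.
have rho_tau_inv : eta rho1 *m invmx (eta tau1) *m eta rho1 =
    eta gam2 *m eta gam1 *m invmx (eta tau1) *m eta gam1 *m eta gam2.
  rewrite -(invmx_conj RR uT) rho_tau -[in LHS](mulmxA _ (eta gam1)).
  by rewrite (invmx_conj gam_inv uT) !mulmxA.
split; [case | by [] | exact: rho_sig | split | split].
- exact: (mulmx1_unit sig_inv).1.
- exact: (mulmx1_unit RR).1.
- exact: uT.
- by rewrite unitmx_inv.
- exact: (mulmx1_unit G1).1.
- exact: (mulmx1_unit G2).1.
- exact: sig_tau.
- exact: rho_tau.
- exact: commute_invmx.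
- exact: rho_tau_inv.
- exact: mulmxV.
- exact: mulVmx.
Qed.

End Representations.

Section Classification.
Variable R : realType.
Local Notation C := R[i].
Implicit Types a b c d f g h k u v w t : C.

Lemma rep_equiv_eta_of_eq (S Rm T G S' R' T' G' : 'M[C]_2) :
  S = S' -> Rm = R' -> T = T' -> G = G' ->
  rep_equiv (eta_of S Rm T G) (eta_of S' R' T' G').
Proof.
move=> -> -> -> ->; exists 1%:M; split; first exact: unitmx1.
by move=> x; rewrite invmx1 mul1mx mulmx1.
Qed.

Lemma rep_equiv_conj (Q Q' S Rm T S' R' T' : 'M[C]_2) :
  Q *m Q' = 1%:M -> S' \in unitmx ->
  S = Q *m S' *m Q' -> Rm = Q *m R' *m Q' -> T = Q *m T' *m Q' ->
  rep_equiv (eta_of S Rm T (I2 R)) (eta_of S' R' T' (I2 R)).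
Proof.
move=> QQ' uS -> -> ->; exists (dsumR Q); split.
  by rewrite unitmx_dsumR; case: (mulmx1_unit QQ').
have -> : invmx (dsumR Q) = dsumR Q'.
  by apply: invmx_eq; rewrite dsumR_mul QQ' dsumR1.
case; rewrite /= ?dsumR_mul ?invmx_conj //.
- by rewrite /I2 mulmx1 QQ'.
- by rewrite /I2 dsumL1 mulmx1 dsumR_mul QQ' dsumR1.
Qed.

Lemma neq0_eq_mul (x y z : C) : x != 0 -> y != 0 -> z = x * y -> z != 0.
Proof. by move=> x0 y0 ->; rewrite mulf_neq0. Qed.

Lemma commuting_mx2_cases a b c d f g h k :
  mx2 a b c d *m mx2 f g h k = mx2 f g h k *m mx2 a b c d ->
  [\/ b != 0 /\ (h = g * c / b /\ k = f + g * (d - a) / b),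
      [/\ b = 0, c != 0 & g = 0 /\ k = f + h * (d - a) / c],
      [/\ b = 0, c = 0 & d = a] |
      [/\ b = 0, c = 0, a != d & g = 0 /\ h = 0]].
Proof.
move=> ST; have [b0|b_neq0] := eqVneq b 0; last first.
  by constructor 1; split => //; apply: mx2_commutant_upper ST.
subst b; have [c0|c_neq0] := eqVneq c 0; last first.
  have [-> ->] := mx2_commutant_lower c_neq0 ST.
  by constructor 2; split; rewrite ?mulr0 ?mul0r.
subst c; have [ad|a_neq_d] := eqVneq a d; first by constructor 3.
by constructor 4; split => //; apply: mx2_commutant_diag ST.
Qed.

Lemma families_antidiagonal a b c d v w f g h k :
  a * d - b * c != 0 -> v * w = 1 ->
  mx2 0 v w 0 *m mx2 a b c d = mx2 a b c d *m mx2 0 v w 0 ->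
  mx2 0 v w 0 *m mx2 f g h k = mx2 f g h k *m mx2 0 v w 0 ->
  thirteen_families
    (eta_of (mx2 a b c d) (mx2 0 v w 0) (mx2 f g h k) (diag2 (-1) 1)).
Proof.
move=> detS vw RS RT.
have v0 : v != 0 by rewrite -unitfE; apply/unitrPr; exists w.
have ew : w = v^-1 by rewrite -[w]mul1r -(mulVf v0) -mulrA vw mulr1.
have [ec ed] := mx2_commutant_upper v0 RS.
have [eh ek] := mx2_commutant_upper v0 RT.
subst w c d h k; left; exists a, b, f, g, v; split => //.
  by apply: (neq0_eq_mul (expf_neq0 2 v0) detS); field.
by apply: rep_equiv_eta_of_eq => //; congr mx2; field.
Qed.

Lemma families_R01_neq0 a b c d u v w t f g h k : v != 0 ->
  a * d - b * c != 0 -> mx2 u v w t *m mx2 u v w t = 1%:M ->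
  mx2 u v w t *m mx2 a b c d = mx2 a b c d *m mx2 u v w t ->
  mx2 u v w t *m mx2 f g h k = mx2 f g h k *m mx2 u v w t ->
  thirteen_families (eta_of (mx2 a b c d) (mx2 u v w t) (mx2 f g h k) (I2 R)).
Proof.
move=> v0 detS /mx2_involution [uw ut _ _] RS RT.
have et : t = - u.
  by move/eqP: ut; rewrite mulf_eq0 (negPf v0) addrC addr_eq0 => /eqP.
have ew : w = (1 - u * u) / v by apply: (mulfI v0); rewrite -uw; field.
have [ec ed] := mx2_commutant_upper v0 RS.
have [eh ek] := mx2_commutant_upper v0 RT.
subst t w c d h k; right; left; exists a, b, f, g, v, (- u); split => //.
  by apply: (neq0_eq_mul (expf_neq0 2 v0) detS); field.
by apply: rep_equiv_eta_of_eq; rewrite ?I2E //; congr mx2; field.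
Qed.

Lemma families_R10_neq0 a b c d u w t f g h k : w != 0 ->
  a * d - b * c != 0 -> mx2 u 0 w t *m mx2 u 0 w t = 1%:M ->
  mx2 u 0 w t *m mx2 a b c d = mx2 a b c d *m mx2 u 0 w t ->
  mx2 u 0 w t *m mx2 f g h k = mx2 f g h k *m mx2 u 0 w t ->
  thirteen_families (eta_of (mx2 a b c d) (mx2 u 0 w t) (mx2 f g h k) (I2 R)).
Proof.
move=> w0 detS /mx2_involution [uu _ ut _] RS RT.
rewrite mul0r addr0 in uu.
have et : t = - u.
  by move/eqP: ut; rewrite mulf_eq0 (negPf w0) addrC addr_eq0 => /eqP.
have [eb ed] := mx2_commutant_lower w0 RS.
have [eg ek] := mx2_commutant_lower w0 RT.
rewrite !mulr0 !mul0r in eb eg.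
subst t b d g k; rewrite mul0r subr0 in detS.
case: (sqr_eq1 uu) => eu; subst u.
- do 6 right; left; exists a, c, f, h, w; split => //.
    by apply: (neq0_eq_mul detS w0); field.
  by apply: rep_equiv_eta_of_eq; rewrite ?I2E //; congr mx2; field.
- do 7 right; left; exists a, c, f, h, w; split => //.
    by apply: (neq0_eq_mul detS w0); field.
  by apply: rep_equiv_eta_of_eq; rewrite ?I2E //; congr mx2; field.
Qed.

Lemma families_R_I2 a b c d f g h k : a * d - b * c != 0 ->
  mx2 a b c d *m mx2 f g h k = mx2 f g h k *m mx2 a b c d ->
  thirteen_families (eta_of (mx2 a b c d) (I2 R) (mx2 f g h k) (I2 R)).
Proof.
move=> detS /commuting_mx2_cases
  [[b0 [eh ek]] | [eb c0 [eg ek]] | [eb ec ed] | [eb ec _ [eg eh]]]; subst.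
- do 3 right; left; exists a, b, c, d, f, g; split => //.
  by apply: rep_equiv_eta_of_eq => //; congr mx2; field.
- rewrite mul0r subr0 in detS; do 9 right; left; exists a, c, d, f, h; split => //.
  by apply: rep_equiv_eta_of_eq => //; congr mx2; field.
- rewrite mulr0 subr0 -expr2 expf_eq0 /= in detS.
  do 8 right; left; exists a, f, g, h, k; split => //.
  by apply: rep_equiv_eta_of_eq; rewrite ?scalar_mx2.
- rewrite mulr0 subr0 in detS; do 12 right; exists a, d, f, k; split => //.
  exact: rep_equiv_eta_of_eq.
Qed.

Lemma families_R_opp_I2 a b c d f g h k : a * d - b * c != 0 ->
  mx2 a b c d *m mx2 f g h k = mx2 f g h k *m mx2 a b c d ->
  thirteen_families (eta_of (mx2 a b c d) (- I2 R) (mx2 f g h k) (I2 R)).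
Proof.
move=> detS /commuting_mx2_cases
  [[b0 [eh ek]] | [eb c0 [eg ek]] | [eb ec ed] | [eb ec ad [eg eh]]]; subst.
- do 2 right; left; exists a, b, c, d, f, g; split => //.
  by apply: rep_equiv_eta_of_eq => //; congr mx2; field.
- rewrite mul0r subr0 in detS; do 5 right; left; exists a, c, d, f, h; split => //.
  by apply: rep_equiv_eta_of_eq => //; congr mx2; field.
- rewrite mulr0 subr0 -expr2 expf_eq0 /= in detS.
  do 4 right; left; exists a, f, g, h, k; split => //.
  by apply: rep_equiv_eta_of_eq; rewrite ?scalar_mx2.
(* No family has [R = -I] with diagonal [S]: conjugating by [[1,1],[0,1]]
   moves [diag(a, d)] into family (3) with [b = a - d]. *)
- rewrite mulr0 subr0 in detS; have a_d : a - d != 0 by rewrite subr_eq0.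
  do 2 right; left; exists a, (a - d), 0, d, f, (f - k); split.
  + by rewrite mulr0 subr0.
  + exact: a_d.
  have QQ' : mx2 1 1 0 1 *m mx2 1 (-1) 0 1 = 1%:M :> 'M[C]_2.
    by rewrite mul_mx2 scalar_mx2; congr mx2; ring.
  apply: (rep_equiv_conj QQ').
  + by rewrite unitmx_mx2 mulr0 subr0.
  + by rewrite !mul_mx2; congr mx2; ring.
  + by rewrite mulmxN mulNmx /I2 mulmx1 QQ'.
  + by rewrite !mul_mx2; congr mx2; field.
Qed.

Lemma families_R_diagonal a b c d u t f g h k :
  a * d - b * c != 0 -> u * u = 1 -> t * t = 1 ->
  mx2 u 0 0 t *m mx2 a b c d = mx2 a b c d *m mx2 u 0 0 t ->
  mx2 u 0 0 t *m mx2 f g h k = mx2 f g h k *m mx2 u 0 0 t ->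
  mx2 a b c d *m mx2 f g h k = mx2 f g h k *m mx2 a b c d ->
  thirteen_families (eta_of (mx2 a b c d) (mx2 u 0 0 t) (mx2 f g h k) (I2 R)).
Proof.
move=> detS uu tt RS RT ST.
have [<-|u_neq_t] := eqVneq u t.
  case: (sqr_eq1 uu) => ->; first by rewrite -I2E; exact: families_R_I2.
  by rewrite -oppr0 -oppmx2 -I2E; exact: families_R_opp_I2.
have [eb ec] := mx2_commutant_diag u_neq_t RS.
have [eg eh] := mx2_commutant_diag u_neq_t RT.
subst b c g h; rewrite mulr0 subr0 in detS.
case: (sqr_eq1 uu) (sqr_eq1 tt) u_neq_t => -> [] ->; rewrite ?eqxx // => _.
- by do 10 right; left; exists a, d, f, k; split; last exact: rep_equiv_eta_of_eq.
- by do 11 right; left; exists a, d, f, k; split; last exact: rep_equiv_eta_of_eq.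
Qed.

Lemma families_gamma_I2 a b c d u v w t f g h k :
  a * d - b * c != 0 -> mx2 u v w t *m mx2 u v w t = 1%:M ->
  mx2 u v w t *m mx2 a b c d = mx2 a b c d *m mx2 u v w t ->
  mx2 u v w t *m mx2 f g h k = mx2 f g h k *m mx2 u v w t ->
  mx2 a b c d *m mx2 f g h k = mx2 f g h k *m mx2 a b c d ->
  thirteen_families (eta_of (mx2 a b c d) (mx2 u v w t) (mx2 f g h k) (I2 R)).
Proof.
move=> detS RR RS RT ST.
have [v0|v_neq0] := eqVneq v 0; last exact: families_R01_neq0.
subst v; have [w0|w_neq0] := eqVneq w 0; last exact: families_R10_neq0.
subst w; have [uu _ _ tt] := mx2_involution RR.
rewrite mulr0 addr0 in uu; rewrite mul0r add0r in tt.
exact: families_R_diagonal.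
Qed.

Lemma families_of_relations (S Rm T G : 'M[C]_2) : S \in unitmx ->
  Rm *m Rm = 1%:M -> Rm *m S = S *m Rm -> Rm *m T = T *m Rm -> S *m T = T *m S ->
  G = I2 R \/ [/\ G = diag2 (-1) 1, Rm 0 0 = 0 & Rm 1 1 = 0] ->
  thirteen_families (eta_of S Rm T G).
Proof.
rewrite (mx2E S) (mx2E T) unitmx_mx2 => detS RR RS RT ST [-> | [-> u0 t0]].
  by move: RR RS RT; rewrite (mx2E Rm) => RR RS RT; apply: families_gamma_I2.
move: RR RS RT; rewrite (mx2E Rm) u0 t0 => /mx2_involution [vw _ _ _] RS RT.
by rewrite mul0r add0r in vw; apply: families_antidiagonal.
Qed.

End Classification.

Unset Implicit Arguments.

Theorem theorem4p1 (R : realType) (eta : stvb_gen -> 'M[R[i]]_3) :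
  homogeneous_local_rep eta ->
  thirteen_families eta /\
  (eta tau1 \in unitmx -> stvg_rep (extend_to_stvg eta)).
Proof.
move=> [S [Rm [T [G eta_loc]]]].
have eta_E := eta_of_local_rep eta_loc.
case: eta_loc => rep_eta [uS _ _ _] _ _ _.
split; last exact: stvb_rep_extend.
rewrite eta_E in rep_eta *.
have [RR RS RT ST HG] := eta_of_relations rep_eta.
exact: families_of_relations.
Qed.
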